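(* Let $X$ be a set and let $\mathcal{L}$ be a nest on $X$ that $T_0$-separates $X$. Then $M\in\mathcal{L}$ is a lower set if and only if $M$ has no maximal element.
   Context: A nest on $X$ is a family of subsets of $X$ totally ordered by inclusion; it $T_0$-separates $X$ if for all distinct $x,y\in X$ some member contains exactly one of $x,y$. Define $x\triangleleft_{\mathcal{L}} y$ iff there exists $L\in\mathcal{L}$ with $x\in L$ and $y\notin L$. For $A\subseteq X$, ${\downarrow}A=\{x\in X : \exists y\in A,\ x\triangleleft_{\mathcal{L}} y\}$, and $A$ is a lower set if $A={\downarrow}A$. A maximal element of $M$ is some $m\in M$ for which there is no $y\in M$ with $m\triangleleft_{\mathcal{L}} y$. *)

From mathcomp Require Import all_boot.
From mathcomp Require Import boolp classical_sets.
Set Implicit Arguments. Unset Strict Implicit. Unset Printing Implicit Defensive.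
Local Open Scope classical_set_scope.

Definition nest (X : Type) (L : set (set X)) : Prop :=
  forall A B, L A -> L B -> A `<=` B \/ B `<=` A.

Definition T0_separates (X : Type) (L : set (set X)) : Prop :=
  forall x y : X, x <> y ->
    exists2 A, L A & ((A x /\ ~ A y) \/ (A y /\ ~ A x)).

Definition nest_rel (X : Type) (L : set (set X)) (x y : X) : Prop :=
  exists2 A, L A & (A x /\ ~ A y).

Definition down (X : Type) (L : set (set X)) (A : set X) : set X :=
  [set x | exists2 y, A y & nest_rel L x y].

Definition lower_set (X : Type) (L : set (set X)) (A : set X) : Prop :=
  A = down L A.

Definition maximal_elt (X : Type) (L : set (set X)) (M : set X) (m : X) : Prop :=
  M m /\ ~ (exists2 y, M y & nest_rel L m y).

(* Every member M of a nest is closed downwards: if x lies in some A of the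
   nest that misses a point y of M, then A is contained in M.  So M is a lower
   set exactly when every point of M lies below another point of M, i.e. when
   M has no maximal element. *)

From Pilot Require Import Defs.
From mathcomp Require Import all_boot.
From mathcomp Require Import boolp classical_sets.

Local Open Scope classical_set_scope.

Lemma down_sub_nest_member (X : Type) (L : set (set X)) (M : set X) :
  nest L -> L M -> Defs.down L M `<=` M.
Proof.
move=> hnest LM x [y My [A LA [Ax nAy]]].
case: (hnest A M LA LM) => [AM | MA]; first exact: AM.
by case: nAy; apply: MA.
Qed.

Lemma sub_downP (X : Type) (L : set (set X)) (M : set X) :
  M `<=` Defs.down L M <-> ~ (exists m, maximal_elt L M m).
Proof.
split.
- by move=> Mdown [m [Mm nup]]; apply/nup/Mdown.
- move=> nomax x Mx; apply: contrapT => nup.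
  by apply: nomax; exists x.
Qed.

Theorem proposition3p12 (X : Type) (L : set (set X))
  (hnest : nest L) (hT0 : T0_separates L) (M : set X) (hM : L M) :
  lower_set L M <-> ~ (exists m, maximal_elt L M m).
Proof.
rewrite -sub_downP /lower_set.
split=> [eqM | Mdown]; first by rewrite -eqM.
by rewrite eqEsubset; split; [exact: Mdown | exact: down_sub_nest_member].
Qed.
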